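(* Let $\rho_1\neq\rho_2$ be two rays of $C_{6,2}$ of type $(3,3)$ and let $\tau$ be the 2-face of $C_{6,2}$ spanned by $\rho_1$ and $\rho_2$. Then $\tau\subseteq\Phi(\mathcal Z_2^6)$.
   Context: $\mathcal Z_2$ is the set of zonoids in $\mathbb R^2$ (equivalently, centrally symmetric convex bodies). For $Z=(Z_1,\dots,Z_6)\in\mathcal Z_2^6$ let $\mathrm V_{ij}=\mathrm V(Z_i,Z_j)$ be the mixed area, and $\Phi(Z)\in\mathbb R^{15}$ the vector with coordinates $\mathrm V_{I_1}\mathrm V_{I_2}\mathrm V_{I_3}$ indexed by all partitions $I_1|I_2|I_3$ of $[6]$ into pairs. $C_{6,2}$ is the conic hull of $\Phi(\mathcal Z_2^6)$ (a polyhedral cone in which any two extreme rays span a 2-face). For a 6-tuple $U$ of nonzero vectors in $\mathbb R^2$, $\Phi(U)=\Phi([0,u_1],\dots,[0,u_6])$. A ray is of type $(3,3)$ if it is spanned by $\Phi(U)$ for some $U$ such that $[6]=J_1\sqcup J_2$ with $|J_1|=|J_2|=3$, the vectors indexed by $J_1$ are pairwise parallel, those indexed by $J_2$ are pairwise parallel, and no vector indexed by $J_1$ is parallel to one indexed by $J_2$. *)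

From HB Require Import structures.
From mathcomp Require Import all_boot all_order all_algebra.
From mathcomp Require Import all_classical all_reals all_analysis.
Set Implicit Arguments. Unset Strict Implicit. Unset Printing Implicit Defensive.
Import Order.TTheory GRing.Theory Num.Theory.
Import numFieldNormedType.Exports.
Local Open Scope classical_set_scope.
Local Open Scope ring_scope.

Section Defs.
Variable R : realType.

Definition msum (A B : set (R * R)) : set (R * R) :=
  [set z | exists a b, A a /\ B b /\ z = (a.1 + b.1, a.2 + b.2)].

Definition convex2 (K : set (R * R)) : Prop :=
  forall x y (t : R), K x -> K y -> 0 <= t -> t <= 1 ->
    K (t * x.1 + (1 - t) * y.1, t * x.2 + (1 - t) * y.2).

Definition convex_body2 (K : set (R * R)) : Prop :=
  K !=set0 /\ compact K /\ convex2 K.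

(* zonoids in R^2 = centrally symmetric convex bodies *)
Definition zonoid2 (K : set (R * R)) : Prop :=
  convex_body2 K /\
  exists c : R * R, forall x, K x -> K (2 * c.1 - x.1, 2 * c.2 - x.2).

Definition area2 (A : set (R * R)) : R :=
  fine ((@lebesgue_measure R \x @lebesgue_measure R)%E A).

(* mixed area: area(K+L) = area K + 2 V(K,L) + area L *)
Definition mixed_area (K L : set (R * R)) : R :=
  (area2 (msum K L) - area2 K - area2 L) / 2.

(* partitions of [6] = {0,..,5} into pairs, encoded as fixed-point-free involutions *)
Definition is_pairing (p : {ffun 'I_6 -> 'I_6}) : bool :=
  [forall i, (p (p i) == i) && (p i != i)].

Definition pairing := {p : {ffun 'I_6 -> 'I_6} | is_pairing p}.

(* Phi(Z) in R^15, coordinates indexed by pairings I1|I2|I3 *)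
Definition Phi (Z : 'I_6 -> set (R * R)) : pairing -> R :=
  fun p => \prod_(i < 6 | (i < (sval p) i)%N) mixed_area (Z i) (Z ((sval p) i)).

Definition segment0 (u : R * R) : set (R * R) :=
  [set z | exists t : R, 0 <= t /\ t <= 1 /\ z = (t * u.1, t * u.2)].

Definition PhiU (U : 'I_6 -> R * R) : pairing -> R :=
  Phi (fun i => segment0 (U i)).

Definition parallel2 (u v : R * R) : Prop := u.1 * v.2 - u.2 * v.1 = 0.

Definition type33_tuple (U : 'I_6 -> R * R) : Prop :=
  (forall i, U i <> (0, 0)) /\
  exists J1 : {set 'I_6}, #|J1| = 3%N /\
    (forall i j, i \in J1 -> j \in J1 -> parallel2 (U i) (U j)) /\
    (forall i j, i \notin J1 -> j \notin J1 -> parallel2 (U i) (U j)) /\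
    (forall i j, i \in J1 -> j \notin J1 -> ~ parallel2 (U i) (U j)).

Definition ray_of (v : pairing -> R) : set (pairing -> R) :=
  [set w | exists c : R, 0 <= c /\ w = (fun p => c * v p)].

Definition type33_ray (rho : set (pairing -> R)) : Prop :=
  exists U, type33_tuple U /\ rho = ray_of (PhiU U).

(* the cone spanned by two rays (the 2-face they span) *)
Definition cone2 (r1 r2 : set (pairing -> R)) : set (pairing -> R) :=
  [set w | exists x y, r1 x /\ r2 y /\ w = (fun p => x p + y p)].

Definition Phi_image : set (pairing -> R) :=
  [set w | exists Z : 'I_6 -> set (R * R), (forall i, zonoid2 (Z i)) /\ Phi Z = w].

End Defs.

From Pilot Require Import Defs.
From mathcomp Require Import all_boot all_order all_algebra.
From mathcomp Require Import all_classical all_reals all_analysis.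
From mathcomp Require Import measurable_realfun ring lra zify.
Set Implicit Arguments. Unset Strict Implicit. Unset Printing Implicit Defensive.
Import Order.TTheory GRing.Theory Num.Theory.
Local Open Scope classical_set_scope.
Local Open Scope ring_scope.

(* If the mixed areas of a tuple Z split as V(Z_i, Z_j) = h_i v_j + h_j v_i,
   expanding the product over the pairs of a pairing p gives
     Phi(Z)(p) = sum_S prod_(i in S) h_i * prod_(i notin S) v_i,
   the sum ranging over the sets S meeting every pair of p exactly once
   ("p swaps S").  For segments of type (3,3) with parallel classes J and ~: J
   one may take h supported on J and v on ~: J, so only S = J survives: the ray
   is spanned by the indicator of the pairings swapping J, which does not change
   when J is replaced by ~: J.  Two distinct rays thus come from 3-sets J1, J2
   with #|J1 :&: J2| = 2.  Boxes [0, 2 h_i] x [0, v_i] with h = 1, X, Y, 0 and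
   v = 0, 1, 1, 1 on J1 :&: J2, J1 :\: J2, J2 :\: J1 and the rest leave only
   S = J1 and S = J2, realizing X chi_J1 + Y chi_J2 for all X, Y >= 0.
   Areas are computed by shearing parallelograms into rectangles; shears
   preserve the product Lebesgue measure since they only translate sections. *)

Section plane_area.
Variable R : realType.
Local Notation mu := (@lebesgue_measure R).
Local Notation mu2 := (@lebesgue_measure R \x @lebesgue_measure R)%E.

Lemma lebesgue_measure_shift (c : R) (A : set R) : measurable A ->
  mu [set x | A (x + c)] = mu A.
Proof.
move=> mA; rewrite -[LHS]/(pushforward mu (+%R^~ c : R -> measurableTypeR R) A).
apply/esym/lebesgue_measure_unique => //; first exact: measurable_funD.
move=> mshift _ [[a b] _ <-] /=; rewrite /pushforward.
have -> : +%R^~ c @^-1` `]a, b]%classic = `](a - c), (b - c)]%classic.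
  by apply/seteqP; split => x; rewrite /= !in_itv /= lerBrDr ltrBlDr.
rewrite !lebesgue_measure_itv /= !lte_fin ltrD2r.
by case: ifP => // _; rewrite -!EFinD; congr (_%:E); ring.
Qed.

Definition vshear (k : R) (z : R * R) : R * R := (z.1, z.2 + k * z.1).
Definition hshear (k : R) (z : R * R) : R * R := (z.1 + k * z.2, z.2).

Lemma measurable_hshear (k : R) : measurable_fun setT (hshear k).
Proof.
apply/measurable_fun_pairP; split; last exact: measurable_snd.
apply: measurable_funD; first exact: measurable_fst.
by apply: measurable_funM => //; exact: measurable_snd.
Qed.

Lemma mu2_vshear (k : R) (A : set (R * R)) :
  (forall x, measurable (xsection A x)) -> mu2 (vshear k @^-1` A) = mu2 A.
Proof.
move=> mA; apply: eq_integral => x _ /=.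
have -> : xsection (vshear k @^-1` A) x = [set y | xsection A x (y + k * x)].
  by apply/seteqP; split => y; rewrite /xsection /= !inE.
exact: lebesgue_measure_shift.
Qed.

Lemma mu2_hshear (k : R) (A : set (R * R)) : measurable A ->
  mu2 (hshear k @^-1` A) = mu2 A.
Proof.
move=> mA.
have mB : measurable (hshear k @^-1` A).
  by rewrite -[_ @^-1` _]setTI; exact: measurable_hshear.
have mu2E := @product_measure_unique _ _ _ _ _ mu mu (mu \x^ mu)%E
  (fun X Y mX mY => product_measure2E _ _ mX mY).
rewrite (mu2E _ mA) (mu2E _ mB); apply: eq_integral => y _ /=.
have -> : ysection (hshear k @^-1` A) y = [set x | ysection A y (x + k * y)].
  by apply/seteqP; split => x; rewrite /ysection /= !inE.
exact/lebesgue_measure_shift/measurable_ysection.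
Qed.

Lemma mu2_hline_null (A : set (R * R)) : A `<=` [set z | z.2 = 0] ->
  (forall x, measurable (xsection A x)) /\ mu2 A = 0%E.
Proof.
move=> A0; have sec x : xsection A x `<=` [set 0].
  by move=> y; rewrite /xsection /= inE => /A0.
split => [x|]; first by have [->|->] := subset_set1 (sec x).
rewrite /product_measure1 /= (eq_integral (cst 0%E)) ?integral0 // => x _ /=.
by have [->|->] := subset_set1 (sec x); rewrite ?measure0 ?lebesgue_measure_set1.
Qed.

Lemma mu2_vline_null (A : set (R * R)) : A `<=` [set z | z.1 = 0] -> mu2 A = 0%E.
Proof.
move=> A0; have sec0 x : x != 0 -> xsection A x = set0.
  move=> x0; apply/seteqP; split => y //.
  by rewrite /xsection /= inE => /A0 /= x0'; rewrite x0' eqxx in x0.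
rewrite /product_measure1 /= -(integral_setD1 (r := 0%R)); last 2 first.
- exact: measurableD.
- apply: (eq_measurable_fun (cst 0%E)) => // x.
  by rewrite inE => -[_ /eqP x0]; rewrite sec0 ?measure0.
rewrite (eq_integral (cst 0%E)) ?integral0 // => x.
by rewrite inE => -[_ /eqP x0]; rewrite sec0 ?measure0.
Qed.

Definition det2 (u v : R * R) : R := u.1 * v.2 - u.2 * v.1.

Lemma det2C (u v : R * R) : det2 v u = - det2 u v.
Proof. by rewrite /det2; ring. Qed.

Lemma det2_vshear (k : R) (u v : R * R) : det2 (vshear k u) (vshear k v) = det2 u v.
Proof. by rewrite /det2 /=; ring. Qed.

Definition parallelogram (u v : R * R) : set (R * R) :=
  [set z | exists s t, 0 <= s <= 1 /\ 0 <= t <= 1 /\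
     z = (s * u.1 + t * v.1, s * u.2 + t * v.2)].

Lemma parallelogramC (u v : R * R) : parallelogram u v = parallelogram v u.
Proof.
by apply/seteqP; split => z [s [t [hs [ht ->]]]]; exists t, s; split => //;
  split => //; rewrite addrC [_ * _ + _]addrC.
Qed.

Lemma parallelogram_vshear (k : R) (u v : R * R) :
  parallelogram u v = vshear k @^-1` parallelogram (vshear k u) (vshear k v).
Proof.
apply/seteqP; split => -[z1 z2] [s [t [hs [ht /= [e1 e2]]]]]; exists s, t;
  do 2 split => //; rewrite /vshear /=.
  by rewrite e1 e2; congr pair; ring.
by rewrite -[z2](addrK (k * z1)) e2 e1; congr pair; ring.
Qed.

Lemma parallelogram_hshear (k : R) (u v : R * R) :
  parallelogram u v = hshear k @^-1` parallelogram (hshear k u) (hshear k v).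
Proof.
apply/seteqP; split => -[z1 z2] [s [t [hs [ht /= [e1 e2]]]]]; exists s, t;
  do 2 split => //; rewrite /hshear /=.
  by rewrite e1 e2; congr pair; ring.
by rewrite -[z1](addrK (k * z2)) e1 e2; congr pair; ring.
Qed.

Definition segment0R (a : R) : set R := [set x | exists2 t, 0 <= t <= 1 & x = t * a].

Lemma segment0R_itv (a : R) :
  segment0R a = if 0 <= a then `[0, a]%classic else `[a, 0]%classic.
Proof.
apply/seteqP; split => x.
  move=> [t /andP[t0 t1] ->]; case: ifP => a0 /=; rewrite in_itv /=.
    by rewrite mulr_ge0 //= ler_piMl.
  rewrite mulr_ge0_le0 ?andbT; [nra | done | by rewrite ltW // ltNge a0].
case: ifP => a0 /=; rewrite in_itv /= => /andP[x0 x1].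
  have [a_eq0|a_neq0] := eqVneq a 0.
    by exists 0; [rewrite lexx ler01 | rewrite mul0r; move: x1; rewrite a_eq0; lra].
  have a_gt0 : 0 < a by rewrite lt_neqAle eq_sym a_neq0.
  by exists (x / a); [rewrite divr_ge0 //= ler_pdivrMr // mul1r | rewrite divfK].
have a_lt0 : a < 0 by rewrite ltNge a0.
exists (x / a); last by rewrite divfK // lt_eqF.
by rewrite ler_ndivlMr // mul0r x1 /= ler_ndivrMr // mul1r.
Qed.

Lemma measurable_segment0R (a : R) : measurable (segment0R a).
Proof. by rewrite segment0R_itv; case: ifP. Qed.

Lemma lebesgue_measure_segment0R (a : R) : mu (segment0R a) = `|a|%:E.
Proof.
rewrite segment0R_itv; case: ifPn => a0; rewrite lebesgue_measure_itv /= lte_fin.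
  by case: ltgtP a0 => // [a_gt0|<-] _; rewrite ?normr0 // -EFinD oppr0 addr0 gtr0_norm.
by rewrite ltNge a0 -EFinD add0r ltr0_norm // ltNge.
Qed.

Lemma parallelogram_axes (a b : R) :
  parallelogram (a, 0) (0, b) = segment0R a `*` segment0R b.
Proof.
apply/seteqP; split => -[z1 z2].
  by move=> [s [t [hs [ht [-> ->]]]]]; split; [exists s | exists t] => //=; ring.
by move=> /= [[s hs ->] [t ht ->]]; exists s, t; do 2 split => //=; congr pair; ring.
Qed.

Lemma parallelogram_on_xaxis (a b : R) :
  parallelogram (a, 0) (b, 0) `<=` [set z | z.2 = 0].
Proof. by move=> _ [s [t [_ [_ ->]]]] /=; ring. Qed.

Lemma parallelogram_hside_rect (a b w : R) : w != 0 ->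
  parallelogram (a, 0) (b, w) = hshear (- (b / w)) @^-1` (segment0R a `*` segment0R w).
Proof.
move=> w_neq0; rewrite (parallelogram_hshear (- (b / w))) -parallelogram_axes /hshear /=.
by congr (_ @^-1` parallelogram _ _); congr pair; field.
Qed.

Lemma measurable_xsection_parallelogram_hside (a b w x : R) :
  measurable (xsection (parallelogram (a, 0) (b, w)) x).
Proof.
have [->|w_neq0] := eqVneq w 0; first by case: (mu2_hline_null (@parallelogram_on_xaxis a b)).
apply: measurable_xsection; rewrite parallelogram_hside_rect // -[_ @^-1` _]setTI.
by apply: measurable_hshear => //; apply: measurableX; exact: measurable_segment0R.
Qed.

Lemma mu2_parallelogram_hside (a b w : R) :
  mu2 (parallelogram (a, 0) (b, w)) = `|a * w|%:E.
Proof.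
have [->|w_neq0] := eqVneq w 0.
  by case: (mu2_hline_null (@parallelogram_on_xaxis a b)) => _ ->; rewrite mulr0 normr0.
rewrite parallelogram_hside_rect // mu2_hshear; last first.
  by apply: measurableX; exact: measurable_segment0R.
rewrite product_measure1E; try exact: measurable_segment0R.
rewrite [X in (X * _)%E](_ : _ = `|a|%:E); last exact: lebesgue_measure_segment0R.
rewrite [X in (_ * X)%E](_ : _ = `|w|%:E); last exact: lebesgue_measure_segment0R.
by rewrite -EFinM -normrM.
Qed.

Lemma mu2_parallelogram_axis1 (u v : R * R) : u.1 != 0 ->
  mu2 (parallelogram u v) = `|det2 u v|%:E.
Proof.
move=> u1_neq0; pose k := - (u.2 / u.1).
have ku : vshear k u = (u.1, 0) by rewrite /vshear /k; congr pair; field.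
rewrite (parallelogram_vshear k) -(det2_vshear k) ku; case: (vshear k v) => b w.
rewrite mu2_vshear; last exact: measurable_xsection_parallelogram_hside.
by rewrite mu2_parallelogram_hside /det2 /= mul0r subr0.
Qed.

Lemma mu2_parallelogram (u v : R * R) : mu2 (parallelogram u v) = `|det2 u v|%:E.
Proof.
have [u1_eq0|u1_neq0] := eqVneq u.1 0; last exact: mu2_parallelogram_axis1.
have [v1_eq0|v1_neq0] := eqVneq v.1 0.
  rewrite mu2_vline_null; last by move=> _ [s [t [_ [_ ->]]]] /=; rewrite u1_eq0 v1_eq0; ring.
  by rewrite /det2 u1_eq0 v1_eq0 !mul0r mulr0 subr0 normr0.
by rewrite parallelogramC mu2_parallelogram_axis1 // det2C normrN.
Qed.

Lemma area2_parallelogram (u v : R * R) : area2 (parallelogram u v) = `|det2 u v|.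
Proof. by rewrite /area2 mu2_parallelogram. Qed.

Lemma segment0_parallelogram (u : R * R) : segment0 u = parallelogram u (0, 0).
Proof.
apply/seteqP; split => z.
  move=> [s [s0 [s1 ->]]]; exists s, 0; rewrite s0 s1 lexx ler01 /=.
  by do 2 split => //; congr pair; ring.
move=> [s [t [/andP[s0 s1] [_ ->]]]]; exists s.
by do 2 split => //; congr pair; rewrite /=; ring.
Qed.

Lemma msum_segment0 (u v : R * R) :
  Defs.msum (segment0 u) (segment0 v) = parallelogram u v.
Proof.
apply/seteqP; split => z.
  move=> [a [b [[s [s0 [s1 ->]]] [[t [t0 [t1 ->]]] ->]]]].
  by exists s, t; rewrite s0 s1 t0 t1.
move=> [s [t [/andP[s0 s1] [/andP[t0 t1] ->]]]].
by exists (s * u.1, s * u.2), (t * v.1, t * v.2); split; [exists s | split; [exists t |]].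
Qed.

Lemma mixed_area_segment0 (u v : R * R) :
  mixed_area (segment0 u) (segment0 v) = `|det2 u v| / 2.
Proof.
rewrite /mixed_area msum_segment0 !segment0_parallelogram !area2_parallelogram.
by rewrite /det2 /= !mulr0 !subrr normr0 !subr0.
Qed.

Definition box (a b : R) : set (R * R) := `[0, a]%classic `*` `[0, b]%classic.

Lemma in_box (a b : R) (z : R * R) : box a b z <-> 0 <= z.1 <= a /\ 0 <= z.2 <= b.
Proof. by rewrite /box /= !in_itv. Qed.

Lemma area2_box (a b : R) : 0 <= a -> 0 <= b -> area2 (box a b) = a * b.
Proof.
move=> a0 b0.
have -> : box a b = segment0R a `*` segment0R b by rewrite /box !segment0R_itv a0 b0.
rewrite -parallelogram_axes area2_parallelogram /det2 /=.
by rewrite mulr0 subr0 ger0_norm ?mulr_ge0.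
Qed.

Lemma msum_box (a b a' b' : R) : 0 <= a -> 0 <= b -> 0 <= a' -> 0 <= b' ->
  Defs.msum (box a b) (box a' b') = box (a + a') (b + b').
Proof.
move=> a0 b0 a'0 b'0; apply/seteqP; split => z.
  move=> [x [y [/in_box [/andP[? ?] /andP[? ?]] [/in_box [/andP[? ?] /andP[? ?]] ->]]]].
  by apply/in_box => /=; split; apply/andP; split; lra.
move=> /in_box [/andP[z10 z11] /andP[z20 z21]].
exists (Num.min z.1 a, Num.min z.2 b), (z.1 - Num.min z.1 a, z.2 - Num.min z.2 b).
split; [|split]; last by case: z {z10 z11 z20 z21} => z1 z2 /=; rewrite !subrKC.
  by apply/in_box => /=; rewrite !ge_min !le_min !lexx z10 z20 a0 b0 !orbT.
apply/in_box => /=; rewrite !subr_ge0 !ge_min !lexx.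
by split; apply/andP; split => //; [case: (leP z.1 a) | case: (leP z.2 b)]; lra.
Qed.

Lemma mixed_area_box (a b a' b' : R) : 0 <= a -> 0 <= b -> 0 <= a' -> 0 <= b' ->
  mixed_area (box a b) (box a' b') = (a * b' + a' * b) / 2.
Proof.
move=> a0 b0 a'0 b'0.
rewrite /mixed_area msum_box // !area2_box ?addr_ge0 //; congr (_ / _); ring.
Qed.

Lemma zonoid2_box (a b : R) : 0 <= a -> 0 <= b -> zonoid2 (box a b).
Proof.
move=> a0 b0; split; first split.
- by exists (0, 0); apply/in_box; rewrite /= lexx a0 b0.
- split; first by apply: compact_setX; exact: segment_compact.
  move=> x y t /in_box [/andP[? ?] /andP[? ?]] /in_box [/andP[? ?] /andP[? ?]] t0 t1.
  by apply/in_box => /=; split; apply/andP; split; nra.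
- exists (a / 2, b / 2) => x /in_box [/andP[? ?] /andP[? ?]].
  by apply/in_box => /=; split; apply/andP; split; lra.
Qed.

End plane_area.

Section swaps.
Variable T : finType.

Definition swaps (p : T -> T) (S : {set T}) : bool :=
  [forall i, (p i \in S) != (i \in S)].

Lemma swapsP (p : T -> T) (S : {set T}) :
  reflect (forall i, (p i \in S) = (i \notin S)) (swaps p S).
Proof.
apply: (iffP forallP) => sw i; first by have := sw i; case: (p i \in S); case: (i \in S).
by rewrite sw; case: (i \in S).
Qed.

Lemma swaps_setC (p : T -> T) (S : {set T}) : swaps p (~: S) = swaps p S.
Proof. by apply: eq_forallb => i; rewrite !inE; case: (p i \in S); case: (i \in S). Qed.

Lemma card_swaps (p : T -> T) (S : {set T}) : injective p -> swaps p S ->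
  #|~: S| = #|S|.
Proof.
have le_card A : injective p -> swaps p A -> (#|A| <= #|~: A|)%N.
  move=> p_inj /swapsP sw; rewrite -(card_imset _ p_inj); apply: subset_leq_card.
  by apply/fintype.subsetP => _ /imsetP [i iA ->]; rewrite inE sw iA.
move=> p_inj swS; apply/eqP; rewrite eqn_leq le_card //.
by rewrite -{2}(finset.setCK S) le_card ?swaps_setC.
Qed.

Variables (R : comRingType) (p : T -> T) (L : {set T}).
Hypotheses (pK : involutive p) (swL : swaps p L).

Definition weight (h v : T -> R) (S : {set T}) : R :=
  \prod_(i in S) h i * \prod_(i in ~: S) v i.

(* Each pair {i, p i} has exactly one end in S and exactly one end in L. *)
Lemma weight_swaps (h v : T -> R) (S : {set T}) : swaps p S ->
  weight h v S = \prod_(i in L) (if i \in S then h i * v (p i) else h (p i) * v i).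
Proof.
move=> /swapsP swS; pose w i := if i \in S then h i else v i.
have -> : weight h v S = \prod_i w i.
  by rewrite [RHS](bigID (mem S)) /=; congr (_ * _); apply: eq_big => i;
    rewrite /w ?inE; case: (i \in S).
rewrite (bigID (mem L)) /= [X in _ * X](reindex_inj (inv_inj pK)) /=.
under [X in _ * X]eq_bigl => i do rewrite (swapsP _ _ swL) negbK.
rewrite -big_split /=; apply: eq_bigr => i _.
by rewrite /w swS; case: (i \in S) => //=; rewrite mulrC.
Qed.

Lemma prod_pairs_weight (h v : T -> R) :
  \prod_(i in L) (h i * v (p i) + h (p i) * v i) = \sum_(S | swaps p S) weight h v S.
Proof.
pose F i (b : bool) := if b then h i * v (p i) else h (p i) * v i.
have -> : \prod_(i in L) (h i * v (p i) + h (p i) * v i) =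
    \prod_(i in L) \sum_(b : bool) F i b.
  by apply: eq_bigr => i _; rewrite big_bool.
rewrite (big_distr_big false) /=.
(* A set swapped by p is determined by its trace on L, which is arbitrary. *)
pose set_of (f : {ffun T -> bool}) : {set T} :=
  [set i | if i \in L then f i else ~~ f (p i)]%SET.
pose fun_of (S : {set T}) := [ffun i => (i \in L) && (i \in S)].
have swap_set_of f : swaps p (set_of f).
  apply/swapsP => i; rewrite !inE pK (swapsP _ _ swL).
  by case: (i \in L); rewrite ?negbK.
rewrite [RHS](reindex_onto set_of fun_of) => [|S /swapsP swS]; last first.
  apply/setP => i; rewrite !inE !ffunE.
  by case iL: (i \in L) => //=; rewrite (swapsP _ _ swL) iL /= swS negbK.
apply: eq_big => f.
  rewrite swap_set_of /=; apply/pffun_onP/eqP => [[supp _]|<-].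
    apply/ffunP => i; rewrite ffunE inE; case iL: (i \in L) => //.
    apply/esym/negbTE; apply: contraFN iL => fi.
    by apply: (fintype.subsetP supp); rewrite inE fi.
  split=> [|_ /mapP [i _ ->]] //; apply/fintype.subsetP => i.
  by rewrite !inE ffunE; case: (i \in L).
move=> /pffun_onP [supp _]; rewrite weight_swaps //; apply: eq_bigr => i iL.
by rewrite /F inE iL.
Qed.

End swaps.

Lemma weight_neq0 (T : finType) (R : comRingType) (h v : T -> R) (A B S : {set T}) :
  (forall i, i \notin A -> h i = 0) -> (forall i, i \in B -> v i = 0) ->
  weight h v S != 0 -> (B \subset S) && (S \subset A).
Proof.
move=> hA vB; apply: contraTT; rewrite negbK /weight.
case/nandP => /subsetPn[i iS niS]; apply/eqP.
  by rewrite [X in _ * X](bigD1 i) ?inE //= vB // mul0r mulr0.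
by rewrite (bigD1 i) //= hA // !mul0r.
Qed.

Lemma big_support_seq (I : finType) (R : nmodType) (P : pred I) (F : I -> R) (s : seq I) :
  uniq s -> (forall i, P i -> i \notin s -> F i = 0) ->
  \sum_(i | P i) F i = \sum_(i <- s | P i) F i.
Proof.
move=> s_uniq F0; rewrite (bigID (mem s)) /= [X in _ + X]big1 => [|i /andP[]]; last exact: F0.
rewrite addr0 [RHS]big_mkcond (big_uniq _ s_uniq) -big_mkcondr.
by apply: eq_bigl => i; rewrite andbC.
Qed.

Lemma setI_card_eq (T : finType) (A B : {set T}) :
  #|A| = #|B| -> #|A :&: B| = #|A| -> A = B.
Proof.
move=> cAB cI; apply/eqP; rewrite eqEcard -cAB leqnn andbT.
by apply/finset.setIidPl/eqP; rewrite eqEcard subsetIl cI leqnn.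
Qed.

Lemma between_setI_setU (T : finType) (J1 J2 S : {set T}) :
  #|J1| = #|S| -> #|J2| = #|S| -> #|J1 :&: J2| = #|S|.-1 ->
  J1 :&: J2 \subset S -> S \subset J1 :|: J2 -> S = J1 \/ S = J2.
Proof.
move=> cJ1 cJ2 cI sIS sSU.
have sum_card : (#|S :&: J1| + #|S :&: J2| = #|S| + #|S|.-1)%N.
  rewrite -cardsUI -finset.setIUr -finset.setIIr.
  by rewrite (finset.setIidPl sSU) (finset.setIidPr sIS) cI.
have le1 : (#|S :&: J1| <= #|S|)%N by rewrite subset_leq_card ?subsetIl.
have le2 : (#|S :&: J2| <= #|S|)%N by rewrite subset_leq_card ?subsetIl.
have [eq1|eq2] : #|S :&: J1| = #|S| \/ #|S :&: J2| = #|S| by lia.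
  by left; apply: setI_card_eq.
by right; apply: setI_card_eq.
Qed.

Lemma pairing_involutive (p : pairing) : involutive (sval p).
Proof. by case: p => f /forallP fP i /=; have /andP[/eqP] := fP i. Qed.

Lemma swaps_lower_ends (p : pairing) : swaps (sval p) [set i : 'I_6 | (i < sval p i)%N]%SET.
Proof.
apply/forallP => i; rewrite !inE pairing_involutive.
case: p => f /forallP fP /=; have /andP[_] := fP i.
by rewrite -(inj_eq val_inj) /=; case: ltngtP.
Qed.

Lemma Phi_sum_weight (R : realType) (Z : 'I_6 -> set (R * R)) (h v : 'I_6 -> R) :
  (forall i j, mixed_area (Z i) (Z j) = h i * v j + h j * v i) ->
  forall p : pairing, Phi Z p = \sum_(S | swaps (sval p) S) weight h v S.
Proof.
move=> mixedE p; rewrite -(prod_pairs_weight (pairing_involutive p) (swaps_lower_ends p)).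
by apply: eq_big => [i|i _]; rewrite ?inE ?mixedE.
Qed.

Definition swaps_indicator (R : realType) (J : {set 'I_6}) (p : pairing) : R :=
  (swaps (sval p) J)%:R.

Lemma det2_plucker (R : realType) (a b c d : R * R) :
  det2 a b * det2 c d = det2 a c * det2 b d + det2 a d * det2 c b.
Proof. by rewrite /det2; ring. Qed.

Section type33.
Variables (R : realType) (U : 'I_6 -> R * R) (J : {set 'I_6}) (a b : 'I_6).
Hypotheses (aJ : a \in J) (bJ : b \notin J).
Hypotheses (parJ : forall i j, i \in J -> j \in J -> parallel2 (U i) (U j))
  (parJC : forall i j, i \notin J -> j \notin J -> parallel2 (U i) (U j))
  (nparJ : forall i j, i \in J -> j \notin J -> ~ parallel2 (U i) (U j)).

Let d := `|det2 (U a) (U b)|.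

Let d_gt0 : 0 < d.
Proof. by rewrite normr_gt0; apply/eqP; exact: nparJ. Qed.

Definition type33_h (i : 'I_6) : R := if i \in J then `|det2 (U i) (U b)| / (2 * d) else 0.
Definition type33_v (i : 'I_6) : R := if i \in J then 0 else `|det2 (U a) (U i)|.

Lemma type33_h_notin (i : 'I_6) : i \notin J -> type33_h i = 0.
Proof. by rewrite /type33_h => /negbTE ->. Qed.

Lemma type33_v_in (i : 'I_6) : i \in J -> type33_v i = 0.
Proof. by rewrite /type33_v => ->. Qed.

Lemma mixed_area_type33_cross (i j : 'I_6) : i \in J -> j \notin J ->
  `|det2 (U i) (U j)| / 2 = type33_h i * type33_v j.
Proof.
move=> iJ jJ; rewrite /type33_h /type33_v iJ (negbTE jJ).
have Ui_Ua : det2 (U i) (U a) = 0 := parJ iJ aJ.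
have := det2_plucker (U i) (U j) (U a) (U b); rewrite Ui_Ua mul0r add0r => /(congr1 Num.norm).
rewrite !normrM -/d mulrAC => <-; field; exact: lt0r_neq0.
Qed.

Lemma mixed_area_type33 (i j : 'I_6) :
  mixed_area (segment0 (U i)) (segment0 (U j)) =
    type33_h i * type33_v j + type33_h j * type33_v i.
Proof.
rewrite mixed_area_segment0.
have [iJ|iJ] := boolP (i \in J); have [jJ|jJ] := boolP (j \in J).
- have -> : det2 (U i) (U j) = 0 := parJ iJ jJ.
  by rewrite !type33_v_in // normr0 !mulr0 mul0r addr0.
- by rewrite mixed_area_type33_cross // (type33_h_notin jJ) mul0r addr0.
- by rewrite det2C normrN mixed_area_type33_cross // (type33_h_notin iJ) mul0r add0r.
- have -> : det2 (U i) (U j) = 0 := parJC iJ jJ.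
  by rewrite !type33_h_notin // normr0 !mul0r addr0.
Qed.

Lemma weight_type33_gt0 : 0 < weight type33_h type33_v J.
Proof.
rewrite /weight; apply: mulr_gt0; apply: prodr_gt0 => i; rewrite ?inE => iJ.
  rewrite /type33_h iJ divr_gt0 ?mulr_gt0 // normr_gt0; apply/eqP; exact: nparJ.
by rewrite /type33_v (negbTE iJ) normr_gt0; apply/eqP => /nparJ; apply.
Qed.

Lemma PhiU_type33_indicator :
  PhiU U = (fun p => weight type33_h type33_v J * swaps_indicator R J p).
Proof.
apply/funext => p; rewrite /PhiU (Phi_sum_weight mixed_area_type33).
rewrite (big_support_seq (s := [:: J])) //; last first.
  move=> S _; apply: contraNeq => /(weight_neq0 type33_h_notin type33_v_in) /andP[JS SJ].
  by rewrite inE finset.eqEsubset JS SJ.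
by rewrite big_cons big_nil addr0 /swaps_indicator; case: (swaps _ J); rewrite ?mulr1 ?mulr0.
Qed.

End type33.

Lemma PhiU_type33 (R : realType) (U : 'I_6 -> R * R) : type33_tuple U ->
  exists2 J : {set 'I_6}, #|J| = 3%N &
    exists2 K : R, 0 < K & PhiU U = (fun p => K * swaps_indicator R J p).
Proof.
move=> [_ [J [cJ [parJ [parJC nparJ]]]]]; exists J => //.
have [a aJ] : exists a, a \in J by apply/card_gt0P; rewrite cJ.
have [b] : exists b, b \in ~: J by apply/card_gt0P; rewrite cardsCs finset.setCK cJ card_ord.
rewrite inE => bJ; exists (weight (type33_h U J a b) (type33_v U J a) J).
  exact: weight_type33_gt0.
exact: PhiU_type33_indicator.
Qed.

Lemma ray_of_scale (R : realType) (f : pairing -> R) (K : R) : 0 < K ->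
  ray_of (fun p => K * f p) = ray_of f.
Proof.
move=> K_gt0; apply/seteqP; split => _ [c [c0 ->]].
  by exists (c * K); split; [rewrite mulr_ge0 // ltW | apply/funext => p; rewrite mulrA].
exists (c / K); split; first by rewrite divr_ge0 // ltW.
by apply/funext => p; rewrite mulrA divfK // gt_eqF.
Qed.

Lemma type33_rayE (R : realType) (rho : set (pairing -> R)) : type33_ray rho ->
  exists2 J : {set 'I_6}, #|J| = 3%N & rho = ray_of (swaps_indicator R J).
Proof.
move=> [U [/PhiU_type33 [J cJ [K K_gt0 PhiUE]] ->]].
by exists J => //; rewrite PhiUE ray_of_scale.
Qed.

Section box_realization.
Variable R : realType.

Definition box_h (J1 J2 : {set 'I_6}) (X Y : R) (i : 'I_6) : R :=
  if i \in J1 :&: J2 then 1 else if i \in J1 then X else if i \in J2 then Y else 0.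

Definition box_v (J1 J2 : {set 'I_6}) (i : 'I_6) : R :=
  if i \in J1 :&: J2 then 0 else 1.

Lemma box_hC (J1 J2 : {set 'I_6}) (X Y : R) : box_h J1 J2 X Y = box_h J2 J1 Y X.
Proof.
apply/funext => i; rewrite /box_h finset.setIC inE.
by case: (i \in J1); case: (i \in J2).
Qed.

Lemma box_vC (J1 J2 : {set 'I_6}) : box_v J1 J2 = box_v J2 J1.
Proof. by rewrite /box_v finset.setIC. Qed.

Lemma weight_box (J1 J2 : {set 'I_6}) (X Y : R) : #|J1 :\: J2| = 1%N ->
  weight (box_h J1 J2 X Y) (box_v J1 J2) J1 = X.
Proof.
move=> cD; rewrite /weight [X in _ * X]big1 ?mulr1; last first.
  by move=> i; rewrite /box_v !inE => /negbTE ->.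
rewrite (bigID (mem J2)) /= big1 ?mul1r => [|i /andP[iJ1 iJ2]]; last first.
  by rewrite /box_h inE iJ1 iJ2.
rewrite (eq_bigr (fun=> X)) => [|i /andP[iJ1 /negbTE iJ2]]; last first.
  by rewrite /box_h inE iJ1 iJ2.
rewrite prodr_const -[RHS]expr1; congr (_ ^+ _); rewrite -[RHS]cD.
by apply: eq_card => i; rewrite !inE andbC.
Qed.

Lemma Phi_box_combination (J1 J2 : {set 'I_6}) (X Y : R) :
  #|J1| = 3%N -> #|J2| = 3%N -> #|J1 :&: J2| = 2%N -> 0 <= X -> 0 <= Y ->
  exists2 Z : 'I_6 -> set (R * R), (forall i, zonoid2 (Z i)) &
    Phi Z = (fun p => X * swaps_indicator R J1 p + Y * swaps_indicator R J2 p).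
Proof.
move=> cJ1 cJ2 cI X0 Y0; set h := box_h J1 J2 X Y; set v := box_v J1 J2.
have h0 i : 0 <= h i by rewrite /h /box_h; do 3 case: ifP => _ //.
have v0 i : 0 <= v i by rewrite /v /box_v; case: ifP.
exists (fun i => box (2 * h i) (v i)) => [i|]; first by apply: zonoid2_box; rewrite ?mulr_ge0.
have mixedE i j :
    mixed_area (box (2 * h i) (v i)) (box (2 * h j) (v j)) = h i * v j + h j * v i.
  by rewrite mixed_area_box ?mulr_ge0 //; field.
have hU i : i \notin J1 :|: J2 -> h i = 0.
  by rewrite /h /box_h !inE negb_or => /andP[/negbTE -> /negbTE ->].
have vI i : i \in J1 :&: J2 -> v i = 0 by rewrite /v /box_v => ->.
have cD1 : #|J1 :\: J2| = 1%N by rewrite cardsD cJ1 cI.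
have cD2 : #|J2 :\: J1| = 1%N by rewrite cardsD cJ2 finset.setIC cI.
have J12 : J1 != J2 by apply: contra_eqN cI => /eqP <-; rewrite finset.setIid cJ1.
apply/funext => p; rewrite (Phi_sum_weight mixedE).
rewrite (big_support_seq (s := [:: J1; J2])); last 2 first.
- by rewrite /= inE J12.
- move=> S swS; apply: contraNeq => /(weight_neq0 hU vI) /andP[sIS sSU].
  have cS : #|S| = 3%N.
    have := cardsC S; rewrite (card_swaps (can_inj (pairing_involutive p)) swS) card_ord.
    by rewrite addnn -[6%N]/(3.*2)%N => /double_inj.
  have [->|->] := between_setI_setU (etrans cJ1 (esym cS)) (etrans cJ2 (esym cS))
    (etrans cI (congr1 predn (esym cS))) sIS sSU.
  - exact: mem_head.
  - by rewrite mem_seq2 eqxx orbT.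
rewrite !big_cons big_nil addr0 weight_box // /h /v box_hC box_vC weight_box //.
by rewrite /swaps_indicator; case: (swaps _ J1); case: (swaps _ J2);
  rewrite ?mulr1 ?mulr0 ?addr0 ?add0r.
Qed.
End box_realization.

Lemma swaps_indicator_setC (R : realType) (J : {set 'I_6}) :
  swaps_indicator R (~: J) = swaps_indicator R J.
Proof. by apply/funext => p; rewrite /swaps_indicator swaps_setC. Qed.

Lemma card_setI_or_setIC (J1 J2 : {set 'I_6}) :
  #|J1| = 3%N -> #|J2| = 3%N -> J2 != J1 -> J2 != ~: J1 ->
  #|J1 :&: J2| = 2%N \/ #|J1 :&: ~: J2| = 2%N.
Proof.
move=> cJ1 cJ2 neq1 neq2.
have cJ2C : #|~: J2| = 3%N by rewrite cardsCs finset.setCK card_ord cJ2.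
have /eqP ne3 : #|J1 :&: J2| != 3%N.
  by apply: contra_neq neq1 => cI; rewrite (@setI_card_eq _ J1 J2) ?cJ1.
have /eqP ne0 : #|J1 :&: ~: J2| != 3%N.
  apply: contra_neq neq2 => cI.
  by rewrite (@setI_card_eq _ J1 (~: J2)) ?finset.setCK ?cJ1 ?cJ2C.
have := cardsID J2 J1; rewrite finset.setDE cJ1; lia.
Qed.

Theorem proposition7p5 (R : realType) (rho1 rho2 : set (pairing -> R)) :
  type33_ray rho1 -> type33_ray rho2 -> rho1 <> rho2 ->
  cone2 rho1 rho2 `<=` @Phi_image R.
Proof.
move=> /type33_rayE [J1 cJ1 ->] /type33_rayE [J2 cJ2 ->] rays_neq.
have [J2' [cJ2' cI ->]] : exists J2' : {set 'I_6},
    [/\ #|J2'| = 3%N, #|J1 :&: J2'| = 2%N & swaps_indicator R J2 = swaps_indicator R J2'].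
  have neq1 : J2 != J1 by apply: contra_not_neq rays_neq => ->.
  have neq2 : J2 != ~: J1.
    by apply: contra_not_neq rays_neq => ->; rewrite swaps_indicator_setC.
  case: (card_setI_or_setIC cJ1 cJ2 neq1 neq2) => cI; first by exists J2.
  exists (~: J2); split; rewrite ?swaps_indicator_setC //.
  by rewrite cardsCs finset.setCK card_ord cJ2.
move=> _ [_ [_ [[a [a0 ->]] [[b [b0 ->]] ->]]]].
have [Z zonZ PhiZ] := Phi_box_combination cJ1 cJ2' cI a0 b0.
by exists Z; split => //; rewrite PhiZ.
Qed.
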